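(* Let $n\ge1$ and $\mathcal{A},\mathcal{B}\subseteq D_n$. Suppose either ($I_0A_+=A_+$ and $I_0B_+=B_+$) or ($I_0A_-=A_-$ and $I_0B_-=B_-$). Then $\mathcal{A}$ and $\mathcal{B}$ are right-homometric if and only if they are left-homometric.
   Context: $D_n$ is the set of pairs $(k,\epsilon)$, $k\in\mathbb{Z}_n$, $\epsilon\in\{1,-1\}$, with multiplication $(k,\epsilon)(l,\eta)=(k+\epsilon l,\epsilon\eta)$. Right interval ${}^r\mathbf{int}(x,y)=x^{-1}y$, left interval ${}^l\mathbf{int}(x,y)=yx^{-1}$; ${}^{r}\mathbf{iv}(\mathcal{A})(g)=\#\{(x,y)\in\mathcal{A}^2:{}^r\mathbf{int}(x,y)=g\}$, similarly ${}^l\mathbf{iv}$; right-/left-homometric means equal ${}^r\mathbf{iv}$ / ${}^l\mathbf{iv}$. $A_+=\{k:(k,1)\in\mathcal{A}\}$, $A_-=\{k:(k,-1)\in\mathcal{A}\}$, similarly $B_\pm$. For $A\subseteq\mathbb{Z}_n$, $I_0A=\{-a:a\in A\}$. *)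

From HB Require Import structures.
From mathcomp Require Import all_boot all_order all_algebra.
Set Implicit Arguments. Unset Strict Implicit. Unset Printing Implicit Defensive.
Import GRing.Theory.
Local Open Scope ring_scope.

(* Z_n, for n >= 1, as the ordinal type 'I_(n.-1).+1 (which has the Zp
   additive group structure; for n >= 1 its cardinality is n). *)
Definition Zn (n : nat) : finZmodType := 'I_(n.-1).+1.

(* D_n = Z_n x {1,-1}; the sign epsilon is encoded by a bool:
   true <-> 1, false <-> -1. *)
Definition Dn (n : nat) : finType := (Zn n * bool)%type.

Definition sgact (n : nat) (e : bool) (l : Zn n) : Zn n := if e then l else - l.

(* (k,e)(l,h) = (k + e l, e h) *)
Definition dmul (n : nat) (x y : Dn n) : Dn n :=
  (x.1 + sgact x.2 y.1, x.2 == y.2).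

Definition dinv (n : nat) (x : Dn n) : Dn n := (- sgact x.2 x.1, x.2).

Definition rint (n : nat) (x y : Dn n) : Dn n := dmul (dinv x) y.
Definition lint (n : nat) (x y : Dn n) : Dn n := dmul y (dinv x).

Definition riv (n : nat) (A : {set Dn n}) (g : Dn n) : nat :=
  #|[set p : Dn n * Dn n | [&& p.1 \in A, p.2 \in A & rint p.1 p.2 == g]]|.
Definition liv (n : nat) (A : {set Dn n}) (g : Dn n) : nat :=
  #|[set p : Dn n * Dn n | [&& p.1 \in A, p.2 \in A & lint p.1 p.2 == g]]|.

Definition right_homometric (n : nat) (A B : {set Dn n}) : Prop :=
  forall g, riv A g = riv B g.
Definition left_homometric (n : nat) (A B : {set Dn n}) : Prop :=
  forall g, liv A g = liv B g.

Definition Aplus (n : nat) (A : {set Dn n}) : {set Zn n} := [set k | (k, true) \in A].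
Definition Aminus (n : nat) (A : {set Dn n}) : {set Zn n} := [set k | (k, false) \in A].

Definition I0 (n : nat) (A : {set Zn n}) : {set Zn n} := [set - a | a in A].

(* Fix a sign b whose part of the set is symmetric under negation.  The
   involution of pairs (x, y) that fixes pairs of sign (b, b), swaps pairs of
   sign (-b, -b) and negates the member of sign b of a mixed pair preserves
   membership in the set, and the left interval of the image pair is the
   right interval x^-1 y, up to negating its Z_n-component when b = -1.  So the left interval vector is the
   right one composed with a fixed bijection of D_n, and the two kinds of
   homometry coincide. *)

From mathcomp Require Import all_boot all_order all_algebra.
Import GRing.Theory.
Local Open Scope ring_scope.

Section IntervalVectors.
Variable n : nat.
Implicit Types (A : {set Dn n}) (b : bool) (g : Dn n) (p : Dn n * Dn n).

Definition signed_part A b : {set Zn n} := [set k | (k, b) \in A].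

Definition sgflip b g : Dn n := (sgact b g.1, g.2).

Lemma sgflipK b : involutive (sgflip b).
Proof. by case: b => -[k e] //; rewrite /sgflip /sgact /= opprK. Qed.

Definition pair_fold b p : Dn n * Dn n :=
  let: ((k, e), (l, h)) := p in
  if e == h then (if e == b then p else (p.2, p.1))
  else if e == b then ((- k, e), (l, h)) else ((k, e), (- l, h)).

Lemma pair_foldK b : involutive (pair_fold b).
Proof. by case=> -[k e] [l h]; case: b e h => -[] [] //=; rewrite opprK. Qed.

Lemma lint_pair_fold b p :
  lint (pair_fold b p).1 (pair_fold b p).2 = sgflip b (rint p.1 p.2).
Proof.
case: p => -[k e] [l h]; case: b e h => -[] [];
by rewrite /lint /rint /dmul /dinv /sgflip /sgact /= ?opprD ?opprK // addrC.
Qed.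

Lemma I0_memN {S : {set Zn n}} k : I0 S = S -> (- k \in S) = (k \in S).
Proof.
move=> SN; apply/idP/idP => Sk; rewrite -SN; apply/imsetP.
  by exists (- k); rewrite ?opprK.
by exists k.
Qed.

Lemma pair_fold_mem b A p : I0 (signed_part A b) = signed_part A b ->
  ((pair_fold b p).1 \in A) && ((pair_fold b p).2 \in A) =
  (p.1 \in A) && (p.2 \in A).
Proof.
move=> AbN; have memN k : ((- k, b) \in A) = ((k, b) \in A).
  by have := I0_memN k AbN; rewrite !inE.
by case: p => -[k e] [l h]; clear AbN; case: b e h memN => -[] [] memN /=;
  rewrite ?memN // andbC.
Qed.

Lemma liv_sgflip {b A} g : I0 (signed_part A b) = signed_part A b ->
  liv A g = riv A (sgflip b g).
Proof.
move=> AbN; rewrite /liv /riv -(card_imset _ (can_inj (pair_foldK b))).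
apply: eq_card => p; rewrite inE andbA.
have lint_eq q : (lint q.1 q.2 == g) =
    (rint (pair_fold b q).1 (pair_fold b q).2 == sgflip b g).
  rewrite -[in LHS](pair_foldK b q) lint_pair_fold -[g in LHS](sgflipK b).
  by rewrite (can_eq (sgflipK b)).
apply/imsetP/andP => [[q] | [pA /eqP pg]].
  rewrite !inE andbA => /andP[qA /eqP qg] ->.
  by rewrite pair_fold_mem // qA -lint_eq qg.
exists (pair_fold b p); last by rewrite pair_foldK.
by rewrite !inE andbA pair_fold_mem // pA lint_eq pair_foldK pg eqxx.
Qed.

Lemma right_left_homometric {b A B} :
  I0 (signed_part A b) = signed_part A b ->
  I0 (signed_part B b) = signed_part B b ->
  right_homometric A B <-> left_homometric A B.
Proof.
move=> AbN BbN; split=> AB g.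
  by rewrite (liv_sgflip g AbN) (liv_sgflip g BbN).
by rewrite -[g](sgflipK b) -!(liv_sgflip _ AbN) -!(liv_sgflip _ BbN) in AB *.
Qed.

End IntervalVectors.

Theorem mainTheorem9 (n : nat) (hn : (1 <= n)%N) (A B : {set Dn n}) :
  (I0 (Aplus A) = Aplus A /\ I0 (Aplus B) = Aplus B) \/
  (I0 (Aminus A) = Aminus A /\ I0 (Aminus B) = Aminus B) ->
  (right_homometric A B <-> left_homometric A B).
Proof.
by case=> -[AN BN]; apply: right_left_homometric AN BN.
Qed.
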